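(* Let $d\ge2$ and let $\mathbf{p}^\star=(1,p_2^\star,\dots,p_d^\star)\in(0,\infty)^d$ be a maximizer over $\mathbf{p}\in(0,\infty)^d$ of $$\min_{k\in\{1,\dots,d\}}\frac{\prod_{i=1}^d p_i}{D_k(\mathbf{p})^d}.$$ Then $D(\mathbf{p}^\star):=\max_{k\in\{1,\dots,d\}}D_k(\mathbf{p}^\star)=D_1(\mathbf{p}^\star)$.
   Context: For $k\in\{1,\dots,d\}$ let $\mathbf{w}_k\in\mathbb{R}^d$ have entries $w_{k,i}=0$ for $i<k$, $w_{k,k}=k$, $w_{k,i}=i-1$ for $k<i\le d$, and set $D_k(\mathbf{p})=\sqrt{\sum_{i=1}^d w_{k,i}^2p_i^2}$. Thus e.g. $D_1(\mathbf{p})^2=p_1^2+p_2^2+4p_3^2+\dots+(d-1)^2p_d^2$ and $D_d(\mathbf{p})^2=d^2p_d^2$. *)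

From mathcomp Require Import all_boot all_order all_algebra.
From mathcomp Require Import reals.
Set Implicit Arguments. Unset Strict Implicit. Unset Printing Implicit Defensive.
Import Order.TTheory GRing.Theory Num.Theory.
Local Open Scope ring_scope.

(* Indices are 0-based: ordinal i : 'I_d stands for the paper's index i+1.
   Paper: w_{k,i} = 0 (i<k), k (i=k), i-1 (i>k), for 1-based k,i.
   0-based (k,i): 0 (i<k), k+1 (i=k), i (i>k). *)
Definition wgt (d : nat) (k i : 'I_d) : nat :=
  if (i < k)%N then 0%N else if i == k then k.+1 else nat_of_ord i.

Definition Dk {R : realType} (d : nat) (k : 'I_d) (p : 'I_d -> R) : R :=
  Num.sqrt (\sum_(i < d) ((wgt k i)%:R ^+ 2 * p i ^+ 2)).

Definition ratio {R : realType} (d : nat) (p : 'I_d -> R) (k : 'I_d) : R :=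
  (\prod_(i < d) p i) / (Dk k p) ^+ d.

Definition objective {R : realType} (n : nat) (p : 'I_n.+1 -> R) : R :=
  \big[Num.min/ratio p ord0]_(k < n.+1) ratio p k.

Definition positive_vec {R : realType} (d : nat) (p : 'I_d -> R) : Prop :=
  forall i, 0 < p i.

Definition Dmax {R : realType} (n : nat) (p : 'I_n.+1 -> R) : R :=
  \big[Num.max/Dk ord0 p]_(k < n.+1) Dk k p.

From Pilot Require Import Defs.
From mathcomp Require Import all_boot all_order all_algebra.
From mathcomp Require Import reals.
From mathcomp Require Import ring.
Set Implicit Arguments. Unset Strict Implicit. Unset Printing Implicit Defensive.
Import Order.TTheory GRing.Theory Num.Theory.
Local Open Scope ring_scope.

(* At a maximizer with D_1 < D, raise p_1 from 1 to t > 1 so that D_1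
   becomes D.  The weights w_{k,1} vanish for k > 1, so every other D_k is
   unchanged, while the product of the p_i gets multiplied by t.  Hence every
   ratio of the new point is at least t times the optimal value, contradicting
   maximality. *)

Lemma wgt_diag (d : nat) (k : 'I_d) : wgt k k = k.+1.
Proof. by rewrite /wgt ltnn eqxx. Qed.

Lemma wgt0r (n : nat) (k : 'I_n.+1) : k != ord0 -> wgt k ord0 = 0%N.
Proof. by rewrite -(inj_eq val_inj) /wgt /= lt0n => ->. Qed.

Section Norms.
Variables (R : realType) (d : nat).
Implicit Types (p : 'I_d -> R) (k : 'I_d).

Lemma sqr_Dk k p : Dk k p ^+ 2 = \sum_(i < d) ((wgt k i)%:R ^+ 2 * p i ^+ 2).
Proof. by rewrite sqr_sqrtr // sumr_ge0 // => i _; rewrite mulr_ge0 ?sqr_ge0. Qed.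

Lemma Dk_ge0 k p : 0 <= Dk k p.
Proof. exact: sqrtr_ge0. Qed.

Lemma Dk_gt0 k p : positive_vec p -> 0 < Dk k p.
Proof.
move=> ppos; rewrite sqrtr_gt0 (bigD1 k) //= ltr_pwDl ?sumr_ge0 //.
  by rewrite wgt_diag mulr_gt0 // exprn_gt0 // ltr0n.
by move=> i _; rewrite mulr_ge0 ?sqr_ge0.
Qed.

Lemma ratio_gt0 k p : positive_vec p -> 0 < Defs.ratio p k.
Proof.
by move=> ppos; rewrite divr_gt0 ?exprn_gt0 ?Dk_gt0 // prodr_gt0.
Qed.

End Norms.

Section Objective.
Variables (R : realType) (n : nat).
Implicit Types (p q : 'I_n.+1 -> R).

Lemma objective_le_ratio p k : objective p <= Defs.ratio p k.
Proof. by rewrite /objective (bigD1 k) //= ge_min lexx. Qed.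

Lemma objective_ge p c : (forall k, c <= Defs.ratio p k) -> c <= objective p.
Proof.
move=> c_le; apply: (big_ind (fun x => c <= x)) => // x y cx cy.
by rewrite le_min cx cy.
Qed.

Lemma objective_gt0 p : positive_vec p -> 0 < objective p.
Proof.
move=> ppos; apply: (big_ind (fun x => 0 < x)) => [|x y x0 y0|k _].
- exact: ratio_gt0.
- by rewrite lt_min x0 y0.
- exact: ratio_gt0.
Qed.

Lemma Dmax_attained p : exists j, Dmax p = Dk j p.
Proof.
apply: (big_ind (fun x => exists j, x = Dk j p)); first by exists ord0.
  by move=> x y [i ->] [j ->]; rewrite /Order.max; case: ifP; [exists j|exists i].
by move=> i _; exists i.
Qed.

Lemma Dk0_le_Dmax p : Dk ord0 p <= Dmax p.
Proof. by rewrite /Dmax (bigD1 ord0) //= le_max lexx. Qed.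

Lemma objective_ge_scaled p q c :
  0 <= c -> positive_vec p -> positive_vec q ->
  \prod_(i < n.+1) q i = c * \prod_(i < n.+1) p i ->
  (forall k, exists j, Dk k q <= Dk j p) ->
  c * objective p <= objective q.
Proof.
move=> c0 ppos qpos prod_q Dq_le; apply: objective_ge => k.
have [j Dkj] := Dq_le k.
apply: (@le_trans _ _ (c * Defs.ratio p j)); first by rewrite ler_wpM2l ?objective_le_ratio.
rewrite /Defs.ratio prod_q -mulrA ler_wpM2l // ler_wpM2l ?prodr_ge0 //.
  by move=> i _; apply: ltW.
have Dq0 : 0 < Dk k q by apply: Dk_gt0.
have Dp0 : 0 < Dk j p by apply: Dk_gt0.
by rewrite lef_pV2 ?posrE ?exprn_gt0 // lerXn2r // nnegrE ltW.
Qed.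

Definition with_first p (t : R) : 'I_n.+1 -> R :=
  fun i => if i == ord0 then t else p i.

Lemma with_first_pos p t : positive_vec p -> 0 < t -> positive_vec (with_first p t).
Proof. by move=> ppos t0 i; rewrite /with_first; case: ifP. Qed.

Lemma prod_with_first p t :
  (\prod_(i < n.+1) with_first p t i) * p ord0 = t * \prod_(i < n.+1) p i.
Proof.
rewrite (bigD1 ord0) // [in RHS](bigD1 ord0) //= /with_first eqxx.
under eq_bigr => i /negbTE -> do [].
by rewrite mulrAC mulrA.
Qed.

Lemma Dk_with_first p t k : k != ord0 -> Dk k (with_first p t) = Dk k p.
Proof.
move=> k0; congr Num.sqrt; apply: eq_bigr => i _; rewrite /with_first.
by case: eqP => // ->; rewrite wgt0r // expr0n /= !mul0r.
Qed.

Lemma sqr_Dk0_with_first p t :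
  Dk ord0 (with_first p t) ^+ 2 = Dk ord0 p ^+ 2 + t ^+ 2 - p ord0 ^+ 2.
Proof.
rewrite !sqr_Dk (bigD1 ord0) // [in RHS](bigD1 ord0) //= /with_first eqxx.
under eq_bigr => i /negbTE -> do [].
by rewrite wgt_diag expr1n !mul1r; ring.
Qed.

End Objective.

Theorem lemma4 (R : realType) (n : nat) (pstar : 'I_n.+2 -> R) :
  positive_vec pstar ->
  pstar ord0 = 1 ->
  (forall p : 'I_n.+2 -> R, positive_vec p -> objective p <= objective pstar) ->
  Dmax pstar = Dk ord0 pstar.
Proof.
move=> ppos p1 pmax; set M := Dmax pstar; set D0 := Dk ord0 pstar.
have [D0_lt|] := ltP D0 M; last by move=> M_le; apply/eqP; rewrite eq_le M_le Dk0_le_Dmax.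
exfalso.
have M0 : 0 <= M := le_trans (Dk_ge0 _ _) (Dk0_le_Dmax _).
set t := Num.sqrt (1 + M ^+ 2 - D0 ^+ 2).
have a_gt1 : 1 < 1 + M ^+ 2 - D0 ^+ 2.
  by rewrite -addrA ltrDl subr_gt0 ltr_pXn2r // nnegrE Dk_ge0.
have t_gt1 : 1 < t by rewrite -sqrtr1 ltr_sqrt // (lt_trans ltr01).
have t0 : 0 < t := lt_trans ltr01 t_gt1.
set q := with_first pstar t.
have Dq0 : Dk ord0 q = M.
  apply/eqP; rewrite -(eqrXn2 (n := 2)) ?Dk_ge0 // sqr_Dk0_with_first p1.
  rewrite [t ^+ 2]sqr_sqrtr; last exact: ltW (lt_trans ltr01 a_gt1).
  by rewrite /D0; apply/eqP; ring.
have qpos : positive_vec q := with_first_pos ppos t0.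
have : t * objective pstar <= objective q.
  apply: objective_ge_scaled => //; first exact: ltW.
    by rewrite -prod_with_first p1 mulr1.
  move=> k; have [->|k0] := eqVneq k ord0.
    by have [j Mj] := Dmax_attained pstar; exists j; rewrite Dq0 /M Mj.
  by exists k; rewrite Dk_with_first.
move=> /le_trans/(_ (pmax q qpos)).
by rewrite ger_pMl ?objective_gt0 // leNgt t_gt1.
Qed.
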